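(* For every $\varepsilon\in(0,1]$ there exists $n_0$ such that for every $n\geq n_0$ the following holds. Let $G$ be an $(n,\varepsilon)$-digraph, let $\mathbf{x}$ be a perfect fractional matching of $G$ which is $b$-normal for some $b\geq1$, and let $(Z_t)_{t\in\mathbb{N}_0}$ be a random walk on $G$ induced by $\mathbf{x}$ following the pattern of an oriented path $L=(y_t)_{t\in\mathbb{N}_0}$. Then for every vertex $v\in V(G)$ and every $t\geq5+4b^2\varepsilon^{-1}\log b$, $\mathbb{P}[Z_t=v]=(1\pm e^{-\frac{\varepsilon}{2b^2}t})\frac1n$.
   Context: $\log=\log_2$; $a=(1\pm\delta)\beta$ means $(1-\delta)\beta\leq a\leq(1+\delta)\beta$. Digraphs have no loops and at most one edge from $v$ to $w$ per ordered pair. An $(n,\varepsilon)$-digraph is a digraph on $n$ vertices with every in- and out-degree at least $(\frac12+\varepsilon)n$. A perfect fractional matching of $G$ is $\mathbf{x}\colon E(G)\to\mathbb{R}_{\geq0}$ with $\sum_{w\in N^+(v)}\mathbf{x}_{vw}=1=\sum_{w\in N^-(v)}\mathbf{x}_{wv}$ for all $v$; it is $b$-normal if $\frac1{bn}\leq\mathbf{x}_e\leq\frac bn$ for all $e$. $L=(y_t)_{t\in\mathbb{N}_0}$ is an oriented path (not a subgraph of $G$) whose consecutive vertices $y_t,y_{t+1}$ are joined by exactly one of the edges $y_ty_{t+1}$, $y_{t+1}y_t$. The random walk on $G$ induced by $\mathbf{x}$ following the pattern of $L$ is a Markov chain $(Z_t)$ on $V(G)$ (with arbitrary initial state/distribution)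 with $\mathbb{P}[Z_{t+1}=w\mid Z_t=v]=\mathbf{x}_{vw}$ if $y_ty_{t+1}\in E(L)$ and $vw\in E(G)$, $=\mathbf{x}_{wv}$ if $y_{t+1}y_t\in E(L)$ and $wv\in E(G)$, and $=0$ otherwise. *)

From HB Require Import structures.
From mathcomp Require Import all_boot all_order all_algebra.
From mathcomp Require Import reals sequences exp.
Set Implicit Arguments. Unset Strict Implicit. Unset Printing Implicit Defensive.
Import Order.TTheory GRing.Theory Num.Theory.
Local Open Scope ring_scope.

(* A digraph on vertex set 'I_n: an edge relation E (E v w = edge v -> w),
   without loops.  At most one edge per ordered pair is automatic. *)
Definition loopless n (E : rel 'I_n) := forall v, ~~ E v v.

Definition outdeg n (E : rel 'I_n) (v : 'I_n) : nat := #|[set w | E v w]|.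
Definition indeg n (E : rel 'I_n) (v : 'I_n) : nat := #|[set w | E w v]|.

Definition neps_digraph (R : realType) n (eps : R) (E : rel 'I_n) :=
  loopless E /\
  forall v, ((1/2 + eps) * n%:R <= (outdeg E v)%:R) /\
            ((1/2 + eps) * n%:R <= (indeg E v)%:R).

(* x : weights on edges (values on non-edges are irrelevant). *)
Definition perfect_frac_matching (R : realType) n (E : rel 'I_n)
  (x : 'I_n -> 'I_n -> R) :=
  (forall v w, E v w -> 0 <= x v w) /\
  (forall v, \sum_(w | E v w) x v w = 1) /\
  (forall v, \sum_(w | E w v) x w v = 1).

Definition b_normal (R : realType) n (E : rel 'I_n) (x : 'I_n -> 'I_n -> R)
  (b : R) :=
  forall v w, E v w -> 1 / (b * n%:R) <= x v w <= b / n%:R.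

(* An oriented path L = (y_t) is encoded by its pattern
   dir : nat -> bool, where dir t = true iff y_t y_{t+1} in E(L)
   (and dir t = false iff y_{t+1} y_t in E(L)). *)
Definition trans (R : realType) n (E : rel 'I_n) (x : 'I_n -> 'I_n -> R)
  (dir : nat -> bool) (t : nat) (v w : 'I_n) : R :=
  if dir t then (if E v w then x v w else 0)
  else (if E w v then x w v else 0).

(* Law of Z_t of the Markov chain with initial distribution p0:
   walk_dist ... t v = P[Z_t = v]. *)
Fixpoint walk_dist (R : realType) n (E : rel 'I_n) (x : 'I_n -> 'I_n -> R)
  (dir : nat -> bool) (p0 : 'I_n -> R) (t : nat) : 'I_n -> R :=
  match t with
  | 0 => p0
  | t'.+1 => fun w => \sum_(v : 'I_n)
                 walk_dist E x dir p0 t' v * trans E x dir t' v w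
  end.

Definition is_distribution (R : realType) n (p : 'I_n -> R) :=
  (forall v, 0 <= p v) /\ \sum_(v : 'I_n) p v = 1.

Definition log2 (R : realType) (x : R) : R := ln x / ln 2.

From HB Require Import structures.
From mathcomp Require Import all_boot all_order all_algebra.
From mathcomp Require Import reals sequences exp.
From mathcomp Require Import ring lra.
Import Order.TTheory GRing.Theory Num.Theory.
Set Implicit Arguments.
Unset Strict Implicit.
Unset Printing Implicit Defensive.
Local Open Scope ring_scope.

(* Any two columns of a one-step transition matrix overlap in mass at least
   2 eps / b: two vertices have at least (1/2 + eps) n in- (or out-)neighbours
   each, hence at least 2 eps n common ones, each carrying weight at least
   1 / (b n).  By Dobrushin's coupling argument the oscillation max - min of
   v |-> P[Z_t = v] therefore shrinks by the factor 1 - 2 eps / b at every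
   step.  It is at most b / n after the first step, and P[Z_t = .] has mean
   1 / n, so P[Z_t = v] is within (1 - 2 eps / b)^(t-1) b / n of 1 / n; this is
   below e^(-eps t / (2 b^2)) / n once t >= 5 + 4 b^2 eps^-1 log b.  No lower
   bound on n is needed: n0 = 0 works. *)

Section Contraction.
Variables (R : realFieldType) (T : finType).

Lemma card_setI_lb (A B : {set T}) :
  #|A|%:R + #|B|%:R - #|T|%:R <= #|A :&: B|%:R :> R.
Proof.
have UI : (#|A :|: B| + #|A :&: B|)%:R = (#|A| + #|B|)%:R :> R.
  by rewrite cardsUI.
have UT : #|A :|: B|%:R <= #|T|%:R :> R by rewrite ler_nat max_card.
rewrite !natrD in UI; lra.
Qed.

Lemma dobrushin_contraction (Q : T -> T -> R) (p : T -> R) (D s : R) w w' :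
  (forall u, \sum_v Q v u = 1) ->
  1 - \sum_v Num.min (Q v w) (Q v w') <= s ->
  (forall u v, p u - p v <= D) ->
  \sum_v p v * Q v w - \sum_v p v * Q v w' <= D * s.
Proof.
move=> Q_sum1 overlap_s osc_p.
case: (arg_minP p (isT : predT w)) => m _ m_min.
pose mu v := Num.min (Q v w) (Q v w').
(* Both columns have mass 1, so p may be shifted by its minimum p m; after
   removing the common part mu, the first sum is at most D (1 - sum mu) and
   the second one is nonnegative. *)
have D_ge0 : 0 <= D by have := osc_p w w; rewrite subrr.
have shift : \sum_v p m * (Q v w - Q v w') = 0.
  by rewrite -mulr_sumr sumrB !Q_sum1 subrr mulr0.
have -> : \sum_v p v * Q v w - \sum_v p v * Q v w'
    = \sum_v (p v - p m) * (Q v w - mu v)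
      - \sum_v (p v - p m) * (Q v w' - mu v).
  rewrite -!sumrB -[LHS]subr0 -[X in _ - X]shift -sumrB.
  by apply: eq_bigr => v _; ring.
have up : \sum_v (p v - p m) * (Q v w - mu v) <= D * (1 - \sum_v mu v).
  rewrite -(Q_sum1 w) -sumrB mulr_sumr; apply: ler_sum => v _.
  by rewrite ler_wpM2r ?osc_p // subr_ge0 ge_min lexx.
have lo : 0 <= \sum_v (p v - p m) * (Q v w' - mu v).
  apply: sumr_ge0 => v _; apply: mulr_ge0.
    by rewrite subr_ge0 m_min.
  by rewrite subr_ge0 ge_min lexx orbT.
have := ler_wpM2l D_ge0 overlap_s; lra.
Qed.

Lemma dist_from_uniform_le (p : T -> R) (D : R) (v : T) :
  \sum_u p u = 1 -> (forall u w, p u - p w <= D) ->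
  `|p v - #|T|%:R^-1| <= D.
Proof.
move=> sum1 osc_p.
have n_gt0 : 0 < #|T|%:R :> R by rewrite ltr0n; apply/card_gt0P; exists v.
have mean : \sum_u (p v - p u) = #|T|%:R * p v - 1.
  by rewrite sumrB sum1 sumr_const mulr_natl.
have sumD : \sum_(u : T) D = #|T|%:R * D by rewrite sumr_const mulr_natl.
have up : #|T|%:R * p v - 1 <= #|T|%:R * D.
  by rewrite -mean -sumD; apply: ler_sum => u _; exact: osc_p.
have lo : - (#|T|%:R * D) <= #|T|%:R * p v - 1.
  by rewrite -mean -sumD -sumrN; apply: ler_sum => u _; rewrite lerNl opprB.
have -> : p v - #|T|%:R^-1 = (#|T|%:R * p v - 1) / #|T|%:R.
  by field; rewrite lt0r_neq0.
rewrite normrM normfV (gtr0_norm n_gt0) ler_pdivrMr // ler_norml.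
by apply/andP; split; lra.
Qed.

End Contraction.

Lemma ln_le_log2 (R : realType) (x : R) : 1 <= x -> ln x <= log2 x.
Proof.
move=> x_ge1.
have ln2_gt0 : 0 < ln (2 : R) by rewrite -ln1 ltr_ln ?posrE //; lra.
have ln2_le1 : ln (2 : R) <= 1 by have := @le_ln1Dx R 1 ltac:(lra).
rewrite /log2 ler_pdivlMr //.
by rewrite -[X in _ <= X]mulr1 ler_wpM2l // ln_ge0.
Qed.

Lemma log2_ge0 (R : realType) (x : R) : 1 <= x -> 0 <= log2 x.
Proof. by move=> x_ge1; rewrite (le_trans _ (ln_le_log2 x_ge1)) // ln_ge0. Qed.

Lemma contraction_le_expR (R : realType) (eps b : R) (k : nat) :
  0 < eps -> 1 <= b -> 2 * eps <= b ->
  5 + 4 * b ^+ 2 / eps * log2 b <= k.+1%:R ->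
  (1 - 2 * eps / b) ^+ k * b <= expR (- (eps / (2 * b ^+ 2)) * k.+1%:R).
Proof.
move=> eps_gt0 b_ge1 two_eps_le t_large.
have b_gt0 : 0 < b by lra.
have b_neq0 : b != 0 by rewrite lt0r_neq0.
have eps_neq0 : eps != 0 by rewrite lt0r_neq0.
have s_ge0 : 0 <= 1 - 2 * eps / b by rewrite subr_ge0 ler_pdivrMr // mul1r.
have pow_le : (1 - 2 * eps / b) ^+ k <= expR (- (2 * eps / b) * k%:R).
  rewrite expRM_natr lerXn2r ?nnegrE ?expR_ge0 //.
  exact: expR_ge1Dx.
(* In units of c every term of the exponent inequality becomes linear. *)
pose c := eps / (4 * b ^+ 2).
have c_gt0 : 0 < c by rewrite divr_gt0 // mulr_gt0 // exprn_gt0.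
pose y := 4 * b ^+ 2 / eps * ln b.
have y_le : y <= k%:R - 4.
  have : y <= 4 * b ^+ 2 / eps * log2 b.
    rewrite ler_wpM2l ?ln_le_log2 // ltW //.
    by rewrite divr_gt0 // mulr_gt0 // exprn_gt0.
  rewrite -natr1 in t_large; lra.
have ln_b : ln b = y * c by rewrite /y /c; field; rewrite ?b_neq0 ?eps_neq0.
have b_exp : b = expR (ln b) by rewrite lnK ?posrE.
rewrite [X in _ * X]b_exp; apply: le_trans (ler_wpM2r (expR_ge0 _) pow_le) _.
rewrite -expRD ler_expR ln_b.
have -> : 2 * eps / b = 8 * b * c.
  by rewrite /c; field; rewrite ?b_neq0 ?eps_neq0.
have -> : eps / (2 * b ^+ 2) = 2 * c.
  by rewrite /c; field; rewrite ?b_neq0 ?eps_neq0.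
have k_ge0 : 0 <= k%:R :> R by exact: ler0n.
have c_ge0 := ltW c_gt0.
have b1_ge0 : 0 <= b - 1 by rewrite subr_ge0.
have y_gap : 0 <= k%:R - 4 - y by lra.
have := mulr_ge0 c_ge0 k_ge0.
have := mulr_ge0 c_ge0 (mulr_ge0 k_ge0 b1_ge0).
have := mulr_ge0 c_ge0 y_gap.
rewrite -natr1; nra.
Qed.

Section Walk.
Variables (R : realType) (n : nat) (E : rel 'I_n) (x : 'I_n -> 'I_n -> R).
Variables (b eps : R) (dir : nat -> bool) (p0 : 'I_n -> R).
Hypothesis G_neps : neps_digraph eps E.
Hypothesis x_pfm : perfect_frac_matching E x.
Hypothesis b_ge1 : 1 <= b.
Hypothesis x_normal : b_normal E x b.
Hypothesis p0_distr : is_distribution p0.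

Local Notation P := (trans E x dir).
Local Notation p := (walk_dist E x dir p0).

Lemma trans_ge0 t v w : 0 <= P t v w.
Proof.
case: x_pfm => x_ge0 _; rewrite /trans.
by case: (dir t); case: ifP => // /x_ge0.
Qed.

Lemma trans_sum_in t w : \sum_v P t v w = 1.
Proof.
case: x_pfm => _ [out1 in1]; rewrite /trans.
case: (dir t); first by rewrite -(in1 w) [RHS]big_mkcond.
by rewrite -(out1 w) [RHS]big_mkcond.
Qed.

Lemma trans_sum_out t v : \sum_w P t v w = 1.
Proof.
case: x_pfm => _ [out1 in1]; rewrite /trans.
case: (dir t); first by rewrite -(out1 v) [RHS]big_mkcond.
by rewrite -(in1 v) [RHS]big_mkcond.
Qed.

Lemma trans_le t v w : P t v w <= b / n%:R.
Proof.
have ub_ge0 : 0 <= b / n%:R by rewrite divr_ge0 // (le_trans ler01).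
by rewrite /trans; case: (dir t); case: ifP => // /x_normal /andP[_ ->].
Qed.

Lemma eps_le_half : (0 < n)%N -> eps <= 1/2.
Proof.
case: n E G_neps => [//|m] E' [_ deg] _.
have [out_deg _] := deg ord0.
have : (outdeg E' ord0 <= m.+1)%N.
  by rewrite -[X in (_ <= X)%N]card_ord max_card.
rewrite -(ler_nat R) => out_le.
have : (1/2 + eps) * m.+1%:R <= 1 * m.+1%:R by lra.
rewrite ler_pM2r ?ltr0n //; lra.
Qed.

Lemma trans_overlap t w w' :
  2 * eps / b <= \sum_v Num.min (P t v w) (P t v w').
Proof.
have n_gt0 : 0 < n%:R :> R by rewrite ltr0n (leq_ltn_trans (leq0n w)).
have b_gt0 : 0 < b by apply: (lt_le_trans ltr01 b_ge1).
pose E' v u := if dir t then E v u else E u v.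
pose A := [set v | E' v w]; pose B := [set v | E' v w'].
have A_big : (1/2 + eps) * n%:R <= #|A|%:R.
  by case: G_neps => _ /(_ w) []; rewrite /A /E'; case: (dir t).
have B_big : (1/2 + eps) * n%:R <= #|B|%:R.
  by case: G_neps => _ /(_ w') []; rewrite /B /E'; case: (dir t).
have AB_big : 2 * eps * n%:R <= #|A :&: B|%:R.
  by have := card_setI_lb R A B; rewrite card_ord; lra.
have min_lb v :
    v \in A :&: B -> 1 / (b * n%:R) <= Num.min (P t v w) (P t v w').
  rewrite !inE /E' /trans; case: (dir t) => /andP[e e'];
  rewrite e e' le_min; case/andP: (x_normal e) => -> _.
    by case/andP: (x_normal e') => -> _.
  by case/andP: (x_normal e') => -> _.
apply: le_trans (_ : \sum_(v in A :&: B) 1 / (b * n%:R) <= _).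
  rewrite sumr_const -[X in _ <= X]mulr_natl.
  have -> : 2 * eps / b = (2 * eps * n%:R) * (1 / (b * n%:R)).
    by field; rewrite !lt0r_neq0.
  by rewrite ler_wpM2r // divr_ge0 // mulr_ge0 // ltW.
rewrite [X in _ <= X](bigID (mem (A :&: B))) /= -[X in X <= _]addr0.
apply: lerD; first exact: ler_sum.
by apply: sumr_ge0 => v _; rewrite le_min !trans_ge0.
Qed.

Lemma walk_dist_distribution t : is_distribution (p t).
Proof.
case: p0_distr => p0_ge0 p0_sum1; elim: t => [|t [pt_ge0 pt_sum1]] //=; split.
  by move=> w; apply: sumr_ge0 => v _; rewrite mulr_ge0 ?trans_ge0.
rewrite exchange_big /= -pt_sum1; apply: eq_bigr => v _.
by rewrite -mulr_sumr trans_sum_out mulr1.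
Qed.

Lemma walk_dist1_le w : p 1 w <= b / n%:R.
Proof.
case: p0_distr => p0_ge0 p0_sum1.
apply: (@le_trans _ _ (\sum_v p0 v * (b / n%:R))).
  by apply: ler_sum => v _; rewrite ler_wpM2l ?trans_le.
by rewrite -mulr_suml p0_sum1 mul1r.
Qed.

Lemma walk_dist_osc k u w :
  p k.+1 u - p k.+1 w <= (1 - 2 * eps / b) ^+ k * (b / n%:R).
Proof.
elim: k u w => [|k IHk] u w.
  have [pw_ge0 _] := walk_dist_distribution 1.
  by rewrite expr0 mul1r; have := walk_dist1_le u; have := pw_ge0 w; lra.
rewrite exprSr -mulrA [_ * (b / _)]mulrC mulrA.
apply: dobrushin_contraction => [v||]; first exact: trans_sum_in.
  by have := trans_overlap k.+1 u w; lra.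
exact: IHk.
Qed.

End Walk.

Theorem corollary5p4 (R : realType) (eps : R) :
  0 < eps <= 1 ->
  exists n0 : nat, forall n : nat, (n0 <= n)%N ->
  forall (E : rel 'I_n) (x : 'I_n -> 'I_n -> R) (b : R)
         (dir : nat -> bool) (p0 : 'I_n -> R),
    neps_digraph eps E ->
    perfect_frac_matching E x ->
    1 <= b -> b_normal E x b ->
    is_distribution p0 ->
    forall (v : 'I_n) (t : nat),
      5 + 4 * b ^+ 2 / eps * log2 b <= t%:R ->
      (1 - expR (- (eps / (2 * b ^+ 2)) * t%:R)) / n%:R
        <= walk_dist E x dir p0 t v
        <= (1 + expR (- (eps / (2 * b ^+ 2)) * t%:R)) / n%:R.
Proof.
move=> /andP[eps_gt0 _]; exists 0%N => n _ E x b dir p0.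
move=> G_neps x_pfm b_ge1 x_normal p0_distr v t t_large.
have n_gt0 : (0 < n)%N := leq_ltn_trans (leq0n v) (ltn_ord v).
have time_ge0 : 0 <= 4 * b ^+ 2 / eps * log2 b.
  apply: mulr_ge0; last exact: log2_ge0.
  apply: divr_ge0; last exact: ltW.
  by apply: mulr_ge0; [exact: ler0n | exact: sqr_ge0].
case: t t_large => [|k] t_large; first by have := ler0n R 0; lra.
set e := expR _.
have [_ sum1] := walk_dist_distribution dir x_pfm p0_distr k.+1.
have osc := walk_dist_osc dir G_neps x_pfm b_ge1 x_normal p0_distr k.
have dev := dist_from_uniform_le v sum1 osc.
have rate : (1 - 2 * eps / b) ^+ k * (b / n%:R) <= e / n%:R.
  rewrite mulrA ler_wpM2r ?invr_ge0 // contraction_le_expR //.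
  by have := eps_le_half G_neps n_gt0; lra.
have := le_trans dev rate; rewrite card_ord ler_distl.
by rewrite mulrBl mulrDl mul1r.
Qed.
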